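(* Let $n\ge1$ and let $f=2x_1\cdots x_n\left(\sum_{i=1}^n b_ix_i+c\right)$ with $b_i\in\{0,1\}$, $c\in\{0,1\}$, and $b_j=1$ for some $j$. Let $K=\{j\mid b_j=1\}$. Then: (i) if $K=\{1,\dots,n\}$, then $f=2t_n$ or $f=2s_n$; (ii) if $1\le|K|<n$, then $2v_n\in C(f)$; (iii) if $1\le|K|<n$ and $|K|$ is even, then $C(f)=C(2v_n)$ or $C(f)=C(2v_n)\vee C(2r_n)$; (iv) if $1\le|K|<n$ and $|K|$ is odd, then $C(f)=C(2u_n)$ or $C(f)=C(2p_n)$.
   Context: All operations are on $\mathbb{Z}_8$; $\vee$ is the join in the lattice of clones on $\mathbb{Z}_8$. For an operation $f$, $C(f)$ denotes the clone generated by $f$ together with binary addition and all unary constant operations. For $n\ge1$: $r_n=x_1\cdots x_n$; $t_n=x_1\cdots x_n(x_1+\dots+x_n)$ if $n$ is even and $t_n=x_1\cdots x_n(x_1+\dots+x_n+1)$ if $n$ is odd; $s_n=x_1\cdots x_n(x_1+\dots+x_n)$ if $n$ is odd and $s_n=x_1\cdots x_n(x_1+\dots+x_n+1)$ if $n$ is even; $p_n=x_1^2x_2\cdots x_n$; $u_n=x_1\cdots x_n(x_1+1)$; for $n\ge2$, $v_n=x_1\cdots x_n(x_1+x_2)$. *)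

From mathcomp Require Import all_boot all_order all_algebra.
Set Implicit Arguments. Unset Strict Implicit. Unset Printing Implicit Defensive.
Import GRing.Theory.
Local Open Scope ring_scope.

Definition Z8 := 'Z_8.

(* a k-ary operation on Z_8; arguments are indexed by 'I_k (x_1..x_k = x 0 .. x (k-1)) *)
Definition op (k : nat) := ('I_k -> Z8) -> Z8.
Definition arity_op := {k : nat & op k}.

Definition opset := forall k : nat, op k -> Prop.

Inductive clone_gen (I : Type) (F : I -> arity_op) : forall k : nat, op k -> Prop :=
| cg_gen (i : I) : @clone_gen I F (projT1 (F i)) (projT2 (F i))
| cg_proj k (i : 'I_k) : @clone_gen I F k (fun x => x i)
| cg_comp k m (h : op m) (gs : 'I_m -> op k) :
    @clone_gen I F m h -> (forall j, @clone_gen I F k (gs j)) ->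
    @clone_gen I F k (fun x => h (fun j => gs j x))
| cg_ext k (g g' : op k) : @clone_gen I F k g -> (forall x, g x = g' x) -> @clone_gen I F k g'.

Definition add_op : op 2 := fun x => x ord0 + x ord_max.
Definition const_op (a : Z8) : op 1 := fun _ => a.

Definition C_gens (f : arity_op) (i : option (option Z8)) : arity_op :=
  match i with
  | None => f
  | Some None => existT _ 2 add_op
  | Some (Some a) => existT _ 1 (const_op a)
  end.

Definition C (k : nat) (f : op k) : opset := @clone_gen _ (C_gens (existT _ k f)).

Definition clone_join (A B : opset) : opset :=
  @clone_gen _ (fun o : {o : arity_op | A (projT1 o) (projT2 o) \/ B (projT1 o) (projT2 o)} =>
               sval o).

Definition clone_eq (A B : opset) : Prop := forall k (g : op k), A k g <-> B k g.

(* the variable x_{i+1} (0 if out of range; only used for in-range i) *)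
Definition var n (x : 'I_n -> Z8) (i : nat) : Z8 :=
  if insub i is Some j then x j else 0.

Definition prodx n (x : 'I_n -> Z8) : Z8 := \prod_(i < n) x i.
Definition sumx n (x : 'I_n -> Z8) : Z8 := \sum_(i < n) x i.

Definition r_op n : op n := fun x => prodx x.
Definition t_op n : op n := fun x =>
  if odd n then prodx x * (sumx x + 1) else prodx x * sumx x.
Definition s_op n : op n := fun x =>
  if odd n then prodx x * sumx x else prodx x * (sumx x + 1).
Definition p_op n : op n := fun x => var x 0 * prodx x.
Definition u_op n : op n := fun x => prodx x * (var x 0 + 1).
Definition v_op n : op n := fun x => prodx x * (var x 0 + var x 1).

Definition dbl n (g : op n) : op n := fun x => 2%:R * g x.

Definition f_op n (b : 'I_n -> bool) (c : bool) : op n := fun x =>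
  2%:R * prodx x * (\sum_(i < n) (b i)%:R * x i + (c : nat)%:R).

From mathcomp Require Import all_boot all_algebra all_fingroup.
Set Implicit Arguments. Unset Strict Implicit. Unset Printing Implicit Defensive.
Import GRing.Theory.
Local Open Scope ring_scope.

(* Every operation involved has the shape [x_1 ... x_n * (w_1 x_1 + ... + w_n x_n + d)]
   ([prod_aff w d]); [f] is the one with weight [2] on [K] and constant [2c]. A clone
   on Z_8 containing [+] is closed under sums and negatives of such operations, under
   permutations of the variables, and under replacing [x_l] by [-x_l] and negating,
   which negates only the weight of [x_l]. Subtracting from [f] its image under the transposition of some
   [j \in K] and [l \notin K], then negating [x_l], leaves weight [2] exactly on
   [{j, l}]: this is [2 v_n] up to renaming, so [C(f)] contains every such "pair"
   operation. Adding and subtracting pairs shows that, in the presence of all pairs,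
   weight [2] on [A] and on [B] generate the same clone as soon as [|A| = |B| mod 2].
   Hence [C(f)] depends only on the parity of [|K|] and on [c]: it is generated by
   [2 v_n] (and [2 r_n] = [prod_aff 0 2] when [c = 1]) if [|K|] is even, and by
   weight [2] on the single variable [x_1] with constant [2c], i.e. [2 p_n] or
   [2 u_n], if [|K|] is odd. *)

Lemma Z8_mulrn7 (a : Z8) : a *+ 7 = - a.
Proof. by case: a => [[|[|[|[|[|[|[|[|m]]]]]]]] ?] //; apply: val_inj. Qed.

Lemma mem_imset_perm (T : finType) (s : {perm T}) (A : {set T}) x :
  (x \in s @: A) = ((s^-1)%g x \in A).
Proof. by rewrite -preim_permV inE. Qed.

Lemma perm_map2 (T : finType) (j l a b : T) :
  j != l -> a != b -> exists s : {perm T}, s j = a /\ s l = b.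
Proof.
move=> jl ab; pose s1 := tperm j a.
have a_s1l : a != s1 l by rewrite -{1}(tpermL j a) (inj_eq perm_inj).
exists (s1 * tperm (s1 l) b)%g; rewrite !permM [s1 j]tpermL tpermL.
by rewrite tpermD // eq_sym.
Qed.

Definition prod_aff n (w : 'I_n -> Z8) (d : Z8) : op n :=
  fun x => prodx x * (\sum_i w i * x i + d).

Definition dbl_ind n (A : {set 'I_n}) (i : 'I_n) : Z8 := if i \in A then 2%:R else 0.

Lemma sum_dbl_ind n (A : {set 'I_n}) (x : 'I_n -> Z8) :
  \sum_i dbl_ind A i * x i = 2%:R * \sum_(i in A) x i.
Proof.
rewrite [in RHS]big_mkcond mulr_sumr; apply: eq_bigr => i _.
by rewrite /dbl_ind; case: (i \in A); rewrite ?mul0r ?mulr0.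
Qed.

Lemma clone_gen_sub (I J : Type) (F : I -> arity_op) (G : J -> arity_op) :
  (forall i, clone_gen G (projT2 (F i))) ->
  forall k (g : op k), clone_gen F g -> clone_gen G g.
Proof.
move=> FG k g; elim=> {k g} [i|k i|k m h gs _ Gh _ Ggs|k g g' _ Gg gg'] //.
- exact: cg_proj.
- exact: cg_comp.
- exact: cg_ext Gg gg'.
Qed.

Section AdditiveClone.
Variables (I : Type) (F : I -> arity_op).
Hypothesis addF : clone_gen F add_op.

Lemma clone_add k (g1 g2 : op k) :
  clone_gen F g1 -> clone_gen F g2 -> clone_gen F (fun x => g1 x + g2 x).
Proof.
move=> Fg1 Fg2; pose gs : 'I_2 -> op k := fun i => if i == ord0 then g1 else g2.
apply: cg_ext (cg_comp (gs := gs) addF _) _ => [i|x //].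
by rewrite /gs; case: ifP.
Qed.

Lemma clone_opp k (g : op k) : clone_gen F g -> clone_gen F (fun x => - g x).
Proof.
move=> Fg; have Fgm m : clone_gen F (fun x => g x *+ m.+1).
  elim: m => [|m IHm]; first exact: cg_ext Fg _.
  by apply: cg_ext (clone_add IHm Fg) _ => x; rewrite [RHS]mulrSr.
by apply: cg_ext (Fgm 6) _ => x; apply: Z8_mulrn7.
Qed.

Variable n : nat.
Implicit Types (w : 'I_n -> Z8) (d : Z8) (A B : {set 'I_n}).

Lemma clone_prod_aff_eq w w' d d' : w =1 w' -> d = d' ->
  clone_gen F (prod_aff w d) -> clone_gen F (prod_aff w' d').
Proof.
move=> ww' <- Fw; apply: cg_ext Fw _ => x; rewrite /prod_aff.
by congr (_ * (_ + _)); apply: eq_bigr => i _; rewrite ww'.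
Qed.

Lemma clone_prod_affD w w' d d' :
  clone_gen F (prod_aff w d) -> clone_gen F (prod_aff w' d') ->
  clone_gen F (prod_aff (fun i => w i + w' i) (d + d')).
Proof.
move=> Fw Fw'; apply: cg_ext (clone_add Fw Fw') _ => x.
rewrite /prod_aff -mulrDr addrACA -big_split.
by congr (_ * (_ + _)); apply: eq_bigr => i _; rewrite mulrDl.
Qed.

Lemma clone_prod_affB w w' d d' :
  clone_gen F (prod_aff w d) -> clone_gen F (prod_aff w' d') ->
  clone_gen F (prod_aff (fun i => w i - w' i) (d - d')).
Proof.
move=> Fw Fw'; apply: cg_ext (clone_add Fw (clone_opp Fw')) _ => x.
rewrite /prod_aff -mulrN -mulrDr opprD addrACA -sumrB.
by congr (_ * (_ + _)); apply: eq_bigr => i _; rewrite mulrBl.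
Qed.

Lemma clone_prod_aff_perm (s : {perm 'I_n}) w d :
  clone_gen F (prod_aff w d) -> clone_gen F (prod_aff (fun i => w ((s^-1)%g i)) d).
Proof.
move=> Fw; pose gs : 'I_n -> op n := fun i x => x (s i).
apply: cg_ext (cg_comp (gs := gs) Fw _) _ => [i|x]; first exact: cg_proj.
rewrite /prod_aff /gs /prodx; congr (_ * (_ + _)).
  by rewrite [RHS](reindex_inj (@perm_inj _ s)).
by rewrite [RHS](reindex_inj (@perm_inj _ s)); apply: eq_bigr => i _; rewrite permK.
Qed.

Lemma clone_prod_aff_negvar (l : 'I_n) w d :
  clone_gen F (prod_aff w d) ->
  clone_gen F (prod_aff (fun i => if i == l then - w i else w i) d).
Proof.
move=> Fw; pose gs : 'I_n -> op n := fun i x => if i == l then - x i else x i.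
have Fws : clone_gen F (fun x => prod_aff w d (fun i => gs i x)).
  apply: cg_comp Fw _ => i; rewrite /gs; case: eqP => _; last exact: cg_proj.
  exact/clone_opp/cg_proj.
apply: cg_ext (clone_opp Fws) _ => x; rewrite /prod_aff /gs /prodx.
rewrite [X in - (X * _)](bigD1 l) //= [in RHS](bigD1 l) //= eqxx.
rewrite (eq_bigr x) => [|i /negbTE ->] //.
rewrite [X in _ * (X + _)](eq_bigr (fun i => (if i == l then - w i else w i) * x i)).
  by rewrite mulNr !mulNr opprK.
by move=> i _; case: eqP => _; rewrite ?mulrN ?mulNr.
Qed.

Lemma clone_prod_aff_imset (s : {perm 'I_n}) A d :
  clone_gen F (prod_aff (dbl_ind A) d) -> clone_gen F (prod_aff (dbl_ind (s @: A)) d).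
Proof.
move=> FA; apply: clone_prod_aff_eq (clone_prod_aff_perm s FA) => // i.
by rewrite /dbl_ind mem_imset_perm.
Qed.

Lemma clone_prod_aff_set1 (a a' : 'I_n) d :
  clone_gen F (prod_aff (dbl_ind [set a]) d) -> clone_gen F (prod_aff (dbl_ind [set a']) d).
Proof. by move/(clone_prod_aff_imset (tperm a a')); rewrite imset_set1 tpermL. Qed.

Definition all_pairs := forall a b : 'I_n, a != b ->
  clone_gen F (prod_aff (dbl_ind [set a; b]) 0).

Lemma all_pairs_of_pair (j l : 'I_n) :
  j != l -> clone_gen F (prod_aff (dbl_ind [set j; l]) 0) -> all_pairs.
Proof.
move=> jl Fjl a b ab; have [s [sj sl]] := perm_map2 jl ab.
by have := clone_prod_aff_imset s Fjl; rewrite imsetU !imset_set1 sj sl.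
Qed.

Lemma all_pairs_of_mem A d (j l : 'I_n) :
  j \in A -> l \notin A -> clone_gen F (prod_aff (dbl_ind A) d) -> all_pairs.
Proof.
move=> jA lA FA; have jl : j != l by apply: contraNneq lA => <-.
apply: (all_pairs_of_pair jl).
have := clone_prod_aff_negvar l (clone_prod_affB FA (clone_prod_aff_perm (tperm j l) FA)).
apply: clone_prod_aff_eq => [i|]; last exact: subrr.
rewrite tpermV /dbl_ind !inE.
have [->|ij] := eqVneq i j; first by rewrite (negbTE jl) tpermL jA (negbTE lA) subr0.
have [->|il] := eqVneq i l; first by rewrite tpermR jA (negbTE lA) sub0r opprK.
by rewrite tpermD 1?eq_sym // subrr.
Qed.

Lemma clone_prod_affD2 A d (a a' : 'I_n) :
  all_pairs -> a \in A -> a' \in A -> a != a' ->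
  clone_gen F (prod_aff (dbl_ind A) d) <-> clone_gen F (prod_aff (dbl_ind (A :\ a :\ a')) d).
Proof.
move=> pairs aA a'A aa'.
have dbl_indA i : dbl_ind A i = dbl_ind (A :\ a :\ a') i + dbl_ind [set a; a'] i.
  rewrite /dbl_ind !inE.
  have [->|_] := eqVneq i a'; first by rewrite a'A orbT add0r.
  by have [->|_] := eqVneq i a; rewrite ?aA ?add0r ?addr0.
split=> FA.
- apply: clone_prod_aff_eq (clone_prod_affB FA (pairs a a' aa')) => [i|].
    by rewrite dbl_indA addrK.
  exact: subr0.
- apply: clone_prod_aff_eq (clone_prod_affD FA (pairs a a' aa')) => [i|] //.
  exact: addr0.
Qed.

Lemma clone_prod_aff_parity d : all_pairs -> forall A B, odd #|A| = odd #|B| ->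
  clone_gen F (prod_aff (dbl_ind A) d) <-> clone_gen F (prod_aff (dbl_ind B) d).
Proof.
move=> pairs A B; have [m] := ubnP (#|A| + #|B|); elim: m A B => // m IHm A B.
have cardD2 (C : {set 'I_n}) a a' : a \in C -> a' \in C -> a != a' ->
    #|C| = #|C :\ a :\ a'|.+2.
  move=> aC a'C aa'; rewrite (cardsD1 a) (cardsD1 a' (C :\ a)) aC !inE a'C.
  by rewrite eq_sym aa'.
move=> ltABm oddAB; case: (ltnP 1 #|A|) => [/card_gt1P[a [a' [aA a'A aa']]] | leA1].
  apply: iff_trans (clone_prod_affD2 _ pairs aA a'A aa') _; apply: IHm.
    by move: ltABm; rewrite (cardD2 _ _ _ aA a'A aa') !addSn ltnS => /ltnW.
  by rewrite -oddAB (cardD2 _ _ _ aA a'A aa') /= negbK.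
case: (ltnP 1 #|B|) => [/card_gt1P[a [a' [aB a'B aa']]] | leB1].
  apply: iff_trans _ (iff_sym (clone_prod_affD2 _ pairs aB a'B aa')); apply: IHm.
    by move: ltABm; rewrite (cardD2 _ _ _ aB a'B aa') !addnS ltnS => /ltnW.
  by rewrite oddAB (cardD2 _ _ _ aB a'B aa') /= negbK.
have [A1 | A1] := boolP (#|A| == 1).
  have B1 : #|B| == 1 by move: oddAB leB1; rewrite (eqP A1); case: #|B| => [|[|]].
  move/cards1P: A1 => [a ->]; move/cards1P: B1 => [a' ->].
  by split; apply: clone_prod_aff_set1.
have A0 : #|A| = 0%N by move: leA1 A1; case: #|A| => [|[|]].
have B0 : #|B| = 0%N by move: oddAB leB1; rewrite A0; case: #|B| => [|[|]].
by rewrite (cards0_eq A0) (cards0_eq B0).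
Qed.

End AdditiveClone.

Lemma C_self k (f : op k) : C f f.
Proof. exact: (@cg_gen _ _ None). Qed.

Lemma C_add k (f : op k) : C f add_op.
Proof. exact: (@cg_gen _ _ (Some None)). Qed.

Lemma C_const k (f : op k) a : C f (const_op a).
Proof. exact: (@cg_gen _ _ (Some (Some a))). Qed.

Lemma C_sub (I : Type) (F : I -> arity_op) k (f : op k) :
  clone_gen F f -> clone_gen F add_op -> (forall a, clone_gen F (const_op a)) ->
  forall m (g : op m), C f g -> clone_gen F g.
Proof. by move=> Ff Fadd Fconst; apply: clone_gen_sub => -[[a|]|]; [apply: Fconst | |]. Qed.

Lemma clone_eq_C k m (f : op k) (g : op m) : C f g -> C g f -> clone_eq (C f) (C g).
Proof.
by move=> fg gf p h; split; (apply: C_sub => //; [exact: C_add | exact: C_const]).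
Qed.

Lemma clone_join_l (A B : opset) k (g : op k) : A k g -> clone_join A B g.
Proof. by move=> Ag; apply: (@cg_gen _ _ (exist _ (existT _ k g) (or_introl Ag))). Qed.

Lemma clone_join_r (A B : opset) k (g : op k) : B k g -> clone_join A B g.
Proof. by move=> Bg; apply: (@cg_gen _ _ (exist _ (existT _ k g) (or_intror Bg))). Qed.

Lemma clone_eq_C_join k m p (f : op k) (g : op m) (h : op p) :
  C f g -> C f h -> clone_join (C g) (C h) f ->
  clone_eq (C f) (clone_join (C g) (C h)).
Proof.
move=> fg fh joinf q e; split.
  by apply: C_sub => // [|a]; apply: clone_join_l; [apply: C_add | apply: C_const].
apply: clone_gen_sub => -[[q' e'] /= [ge|he]].
  exact: C_sub fg (C_add f) (C_const f) _ _ ge.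
exact: C_sub fh (C_add f) (C_const f) _ _ he.
Qed.

Lemma var_ord n (x : 'I_n -> Z8) i (lt_i_n : (i < n)%N) : var x i = x (Ordinal lt_i_n).
Proof. by rewrite /var insubT. Qed.

Lemma f_op_prod_aff n (b : 'I_n -> bool) (c : bool) :
  f_op b c =1 prod_aff (dbl_ind [set i | b i]) (if c then 2%:R else 0).
Proof.
move=> x; rewrite /f_op /prod_aff sum_dbl_ind -mulrA mulrCA; congr (_ * _).
rewrite mulrDr [in RHS]big_mkcond; congr (_ * _ + _); last by case: c; rewrite ?mulr1 ?mulr0.
by apply: eq_bigr => i _; rewrite inE; case: (b i); rewrite ?mul1r ?mul0r.
Qed.

Lemma dbl_v_op n (lt_1_n : (1 < n)%N) :
  dbl (@v_op n) =1 prod_aff (dbl_ind [set Ordinal (ltnW lt_1_n); Ordinal lt_1_n]) 0.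
Proof.
move=> x; rewrite /dbl /v_op /prod_aff sum_dbl_ind.
rewrite (var_ord x (ltnW lt_1_n)) (var_ord x lt_1_n).
by rewrite big_setU1 ?inE // big_set1 addr0 mulrCA.
Qed.

Lemma dbl_r_op n : dbl (@r_op n) =1 prod_aff (dbl_ind set0) 2%:R.
Proof. by move=> x; rewrite /dbl /r_op /prod_aff sum_dbl_ind big_set0 mulr0 add0r mulrC. Qed.

Lemma dbl_u_op n (lt_0_n : (0 < n)%N) :
  dbl (@u_op n) =1 prod_aff (dbl_ind [set Ordinal lt_0_n]) 2%:R.
Proof.
by move=> x; rewrite /dbl /u_op /prod_aff sum_dbl_ind var_ord big_set1 mulrCA mulrDr mulr1.
Qed.

Lemma dbl_p_op n (lt_0_n : (0 < n)%N) :
  dbl (@p_op n) =1 prod_aff (dbl_ind [set Ordinal lt_0_n]) 0.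
Proof.
move=> x; rewrite /dbl /p_op /prod_aff sum_dbl_ind var_ord big_set1 addr0.
by rewrite [_ * prodx x]mulrC mulrCA.
Qed.

Lemma f_op_setT n (b : 'I_n -> bool) (c : bool) : [set i | b i] = [set: 'I_n] ->
  (forall x, f_op b c x = dbl (@t_op n) x) \/ (forall x, f_op b c x = dbl (@s_op n) x).
Proof.
move=> KT; have bT i : b i by have := in_setT i; rewrite -KT inE.
have sum_b x : \sum_i (b i)%:R * x i = sumx x by apply: eq_bigr => i _; rewrite bT mul1r.
rewrite /f_op /dbl /t_op /s_op.
by case: c; case: (odd n); [left|right|right|left] => x; rewrite sum_b mulrA ?addr0.
Qed.

Lemma all_pairs_C_dbl_v n (lt_1_n : (1 < n)%N) :
  all_pairs (C_gens (existT _ n (dbl (@v_op n)))) n.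
Proof.
apply: (all_pairs_of_pair (j := Ordinal (ltnW lt_1_n)) (l := Ordinal lt_1_n)) => //.
exact: cg_ext (C_self _) (dbl_v_op lt_1_n).
Qed.

Section ProperSupport.
Variables (n : nat) (b : 'I_n -> bool) (c : bool) (j l : 'I_n).
Hypotheses (bj : b j) (bl : ~~ b l).

Local Notation f := (f_op b c).
Local Notation K := [set i | b i].
Local Notation d := (if c then 2%:R else 0 : Z8).

Lemma lt_1_n : (1 < n)%N.
Proof.
rewrite -[n]card_ord; apply/card_gt1P; exists j, l; split=> //.
by apply: contraNneq bl => <-.
Qed.

Lemma clone_f_parity (I : Type) (F : I -> arity_op) (B : {set 'I_n}) :
  clone_gen F add_op -> all_pairs F n -> odd #|K| = odd #|B| ->
  clone_gen F f <-> clone_gen F (prod_aff (dbl_ind B) d).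
Proof.
move=> Fadd pairs oddKB; apply: iff_trans _ (clone_prod_aff_parity Fadd d pairs oddKB).
by split=> Ff; apply: cg_ext Ff _ => x; rewrite f_op_prod_aff.
Qed.

Lemma C_f_all_pairs : all_pairs (C_gens (existT _ n f)) n.
Proof.
apply: (all_pairs_of_mem (C_add f) (A := K) (d := d) (j := j) (l := l)); rewrite ?inE //.
exact: cg_ext (C_self f) (f_op_prod_aff b c).
Qed.

Lemma C_f_dbl_v : C f (dbl (@v_op n)).
Proof.
have Cf_pair := @C_f_all_pairs (Ordinal (ltnW lt_1_n)) (Ordinal lt_1_n) isT.
exact: cg_ext Cf_pair (fun x => esym (dbl_v_op lt_1_n x)).
Qed.

Lemma C_f_even : ~~ odd #|K| ->
  clone_eq (C f) (C (dbl (@v_op n))) \/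
  clone_eq (C f) (clone_join (C (dbl (@v_op n))) (C (dbl (@r_op n)))).
Proof.
move=> evenK; have n1 := lt_1_n.
set v01 := [set Ordinal (ltnW n1); Ordinal n1].
have Cv_v01 : C (dbl (@v_op n)) (prod_aff (dbl_ind v01) 0) :=
  cg_ext (C_self _) (dbl_v_op n1).
have Cr_set0 : C (dbl (@r_op n)) (prod_aff (dbl_ind set0) 2%:R) :=
  cg_ext (C_self _) (@dbl_r_op n).
have oddK_v01 : odd #|K| = odd #|v01| by rewrite cards2 (negbTE evenK).
have oddK_set0 : odd #|K| = odd #|(set0 : {set 'I_n})| by rewrite cards0 (negbTE evenK).
case/orP: (orbN c) => [cT|cF]; [right; apply: clone_eq_C_join | left; apply: clone_eq_C].
- exact: C_f_dbl_v.
- have := (clone_f_parity (C_add f) C_f_all_pairs oddK_set0).1 (C_self f).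
  rewrite cT => Cf_set0; exact: cg_ext Cf_set0 (fun x => esym (@dbl_r_op n x)).
- have join_add := clone_join_l (C (dbl (@r_op n))) (C_add (dbl (@v_op n))).
  have join_pairs := all_pairs_of_pair (isT : Ordinal (ltnW n1) != Ordinal n1)
    (clone_join_l (C (dbl (@r_op n))) Cv_v01).
  apply: (clone_f_parity join_add join_pairs oddK_set0).2; rewrite cT.
  exact: clone_join_r Cr_set0.
- exact: C_f_dbl_v.
- apply/(clone_f_parity (C_add _) (all_pairs_C_dbl_v n1) oddK_v01).
  by rewrite (negbTE cF).
Qed.

Lemma C_f_odd : odd #|K| ->
  clone_eq (C f) (C (dbl (@u_op n))) \/ clone_eq (C f) (C (dbl (@p_op n))).
Proof.
move=> oddK; have n1 := lt_1_n; set i0 := Ordinal (ltnW n1).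
have oddK_i0 : odd #|K| = odd #|[set i0]| by rewrite cards1.
suff C_f_eq (g : op n) : g =1 prod_aff (dbl_ind [set i0]) d -> clone_eq (C f) (C g).
  case/orP: (orbN c) => [cT|cF]; [left | right]; apply: C_f_eq => x.
    by rewrite cT; apply: dbl_u_op.
  by rewrite (negbTE cF); apply: dbl_p_op.
move=> gQ; apply: clone_eq_C.
  have Cf_i0 := (clone_f_parity (C_add f) C_f_all_pairs oddK_i0).1 (C_self f).
  exact: cg_ext Cf_i0 (fun x => esym (gQ x)).
have Cg_i0 : C g (prod_aff (dbl_ind [set i0]) d) := cg_ext (C_self g) gQ.
have i1_notin : Ordinal n1 \notin [set i0] by rewrite inE.
have pairs_g := all_pairs_of_mem (C_add g) (set11 i0) i1_notin Cg_i0.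
by apply/(clone_f_parity (C_add g) pairs_g oddK_i0).
Qed.
End ProperSupport.

Unset Implicit Arguments.

Theorem theorem4p2 (n : nat) (b : 'I_n -> bool) (c : bool) :
  (1 <= n)%N -> (exists j, b j) ->
  let f := f_op b c in
  let K := [set j | b j] in
  (K = [set: 'I_n] ->
     (forall x, f x = dbl (@t_op n) x) \/ (forall x, f x = dbl (@s_op n) x)) /\
  ((1 <= #|K| < n)%N -> @C n f n (dbl (@v_op n))) /\
  ((1 <= #|K| < n)%N -> ~~ odd #|K| ->
     clone_eq (C f) (C (dbl (@v_op n))) \/
     clone_eq (C f) (clone_join (C (dbl (@v_op n))) (C (dbl (@r_op n))))) /\
  ((1 <= #|K| < n)%N -> odd #|K| ->
     clone_eq (C f) (C (dbl (@u_op n))) \/ clone_eq (C f) (C (dbl (@p_op n)))).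
Proof.
move=> _ [j bj] f K.
have proper : (1 <= #|K| < n)%N -> exists l, ~~ b l.
  case/andP=> _ ltKn; have /subsetPn[l _ lK] : ~~ ([set: 'I_n] \subset K).
    by rewrite subTset; apply: contraTneq ltKn => ->; rewrite cardsT card_ord ltnn.
  by exists l; rewrite inE in lK.
split; first exact: f_op_setT.
split; first by case/proper=> l bl; apply: C_f_dbl_v bj bl.
split; first by case/proper=> l bl; apply: C_f_even bj bl.
by case/proper=> l bl; apply: C_f_odd bj bl.
Qed.
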